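(* Let $\lambda\neq0$ and $x$ be fixed, and let \[ F=F(t;x,\lambda)=\frac{2\lambda}{2\lambda+\log(1+\lambda t)}\Bigl(1+\lambda^{-1}\log(1+\lambda t)\Bigr)^{x}, \] considered for $t$ in a neighborhood of $0$ (or as a formal power series in $t$). Then for every integer $N\ge1$, $F$ satisfies the linear differential equation \[ \frac{d^N F}{dt^N}=\lambda^{N}(1+\lambda t)^{-N}\left(\sum_{r=1}^{N}\sum_{i=0}^{r}a^{(\lambda)}_{i,r-i}(N,x)\,\bigl(2\lambda+\log(1+\lambda t)\bigr)^{-i}\bigl(\lambda+\log(1+\lambda t)\bigr)^{-(r-i)}\right)F, \] where, for $1\le r\le N$ and $0\le i\le r$, \[ a^{(\lambda)}_{i,r-i}(N,x)=(-1)^{N+i-r}\, i!\, S_{1,i-1}(r-i)\,(N-1)!\,H_{N-1,r-1}\,(x)_{r-i}. \]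
   Context: $(x)_0=1$ and $(x)_n=x(x-1)\cdots(x-n+1)$ for $n\ge1$. Generalized harmonic numbers: $H_{N,0}=1$ for all integers $N\ge 0$; $H_{N,1}=1+\frac12+\cdots+\frac1N$ for $N\ge1$; and for $2\le j\le N$, $H_{N,j}=\frac{H_{N-1,j-1}}{N}+\frac{H_{N-2,j-1}}{N-1}+\cdots+\frac{H_{j-1,j-1}}{j}$. Generalized Changhee power sums (for $k=1$), for integers $N\ge0$: $S_{1,-1}(N)=1$, $S_{1,0}(N)=N+1$, $S_{1,j}(N)=\sum_{l=0}^{N}S_{1,j-1}(l)$ for $j\ge1$. *)

From Stdlib Require Import Reals List Factorial.
Import ListNotations.
Open Scope R_scope.

Definition sumR (l : list nat) (f : nat -> R) : R :=
  fold_right Rplus 0 (map f l).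

Fixpoint falling (x : R) (n : nat) : R :=
  match n with
  | O => 1
  | S m => falling x m * (x - INR m)
  end.

(* Generalized harmonic numbers: harm j N = H_{N,j}.
   H_{N,0} = 1, and for j >= 1:  H_{N,j} = sum_{m=j}^{N} H_{m-1,j-1} / m
   (for j = 1 this is 1 + 1/2 + ... + 1/N; for 2 <= j <= N it is the
   paper's recursion; it is 0 for j > N, a case never used). *)
Fixpoint harm (j N : nat) {struct j} : R :=
  match j with
  | O => 1
  | S j' => sumR (seq (S j') (N - j')) (fun m => harm j' (m - 1) / INR m)
  end.

(* Generalized Changhee power sums with index shift:
   S1 j N = S_{1, j-1}(N).  S_{1,-1}(N) = 1, S_{1,j}(N) = sum_{l=0}^N S_{1,j-1}(l)
   (which gives S_{1,0}(N) = N+1). *)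
Fixpoint S1 (j N : nat) {struct j} : nat :=
  match j with
  | O => 1%nat
  | S j' => fold_right Nat.add 0%nat (map (fun l => S1 j' l) (seq 0 (S N)))
  end.

Inductive nth_deriv_on (D : R -> Prop) : nat -> (R -> R) -> (R -> R) -> Prop :=
| nth_deriv_0 (f : R -> R) : nth_deriv_on D 0 f f
| nth_deriv_S (n : nat) (f g h : R -> R) :
    (forall t, D t -> derivable_pt_lim f t (g t)) ->
    nth_deriv_on D n g h -> nth_deriv_on D (S n) f h.

Definition Fgen (lam x t : R) : R :=
  2 * lam / (2 * lam + ln (1 + lam * t)) * Rpower (1 + / lam * ln (1 + lam * t)) x.

Definition acoef (N r i : nat) (x : R) : R :=
  (-1) ^ (N + i - r) * INR (fact i) * INR (S1 i (r - i)) * INR (fact (N - 1))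
  * harm (r - 1) (N - 1) * falling x (r - i).

Definition coefN (lam x : R) (N : nat) (t : R) : R :=
  lam ^ N / (1 + lam * t) ^ N *
  sumR (seq 1 N) (fun r =>
    sumR (seq 0 (S r)) (fun i =>
      acoef N r i x / (2 * lam + ln (1 + lam * t)) ^ i
                    / (lam + ln (1 + lam * t)) ^ (r - i))).

(* Write L = ln (1 + lam t), P = L' = lam / (1 + lam t), a = 1 / (2 lam + L) and
   b = 1 / (lam + L).  Then P' = -P^2, a' = -P a^2, b' = -P b^2 and
   F'/F = P (x b - a), so differentiation acts on polynomials in a and b
   through the derivation -P (a^2 d/da + b^2 d/db).  The homogeneous
   polynomials W_r = sum_i w_(i, r-i) a^i b^(r-i) with
   w_(i,j) = (-1)^j i! S_(1,i-1)(j) (x)_j satisfy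
   W_(r+1) = (a^2 d/da + b^2 d/db) W_r + (a - x b) W_r,
   which is the Pascal-type recursion of S_1 combined with
   (x)_(j+1) = (x)_j (x - j).  Hence (W_r F)' = -P W_(r+1) F, and with
   K_N = sum_(s<N) H_(N-1,s) W_(s+1) the coefficient of the theorem is
   (-1)^N (N-1)! P^N K_N; differentiating it once more reproduces the
   recursion H_(N,s+1) = H_(N-1,s+1) + H_(N-1,s) / N of the harmonic
   numbers. *)
From Stdlib Require Import Reals List Arith Lia Lra.
From Coquelicot Require Import Coquelicot.
Import ListNotations.
Open Scope R_scope.

Lemma sumR_cons k l f : sumR (k :: l) f = f k + sumR l f.
Proof. reflexivity. Qed.

Lemma sumR_app l1 l2 f : sumR (l1 ++ l2) f = sumR l1 f + sumR l2 f.
Proof.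
induction l1 as [|k l1 IH]; simpl; [unfold sumR; simpl; ring|].
rewrite !sumR_cons, IH; ring.
Qed.

Lemma sumR_ext_in l f g : (forall k, In k l -> f k = g k) -> sumR l f = sumR l g.
Proof.
induction l as [|k l IH]; intros Hfg; [reflexivity|].
rewrite !sumR_cons, Hfg, IH; auto using in_eq, in_cons.
Qed.

Lemma sumR_plus l f g : sumR l (fun k => f k + g k) = sumR l f + sumR l g.
Proof. induction l as [|k l IH]; [unfold sumR; simpl; ring|]. rewrite !sumR_cons, IH; ring. Qed.

Lemma sumR_scal l c f : sumR l (fun k => c * f k) = c * sumR l f.
Proof. induction l as [|k l IH]; [unfold sumR; simpl; ring|]. rewrite !sumR_cons, IH; ring. Qed.

Lemma sumR_shift s n f : sumR (seq (S s) n) f = sumR (seq s n) (fun k => f (S k)).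
Proof. rewrite <- seq_shift. unfold sumR. rewrite map_map. reflexivity. Qed.

Lemma sumR_first n f : sumR (seq 0 (S n)) f = f 0%nat + sumR (seq 0 n) (fun k => f (S k)).
Proof.
change (seq 0 (S n)) with (0%nat :: seq 1 n). rewrite sumR_cons, sumR_shift. reflexivity.
Qed.

Lemma sumR_last s n f : sumR (seq s (S n)) f = sumR (seq s n) f + f (s + n)%nat.
Proof. rewrite seq_S, sumR_app, sumR_cons. change (sumR [] f) with 0. ring. Qed.

Lemma sumR_seq_succ_split n (f A B : nat -> R) :
  f 0%nat = B 0%nat -> f (S n) = A n ->
  (forall i, (i < n)%nat -> f (S i) = A i + B (S i)) ->
  sumR (seq 0 (S (S n))) f = sumR (seq 0 (S n)) (fun i => A i + B i).
Proof.
intros Hfirst Hlast Hmid.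
rewrite sumR_first, (sumR_last 0 n (fun k => f (S k))), sumR_plus,
  (sumR_last 0 n A), (sumR_first n B).
simpl (0 + n)%nat. rewrite Hfirst, Hlast.
rewrite (sumR_ext_in _ _ (fun i => A i + B (S i))).
- rewrite sumR_plus. ring.
- intros i Hi. apply in_seq in Hi. apply Hmid. lia.
Qed.

Lemma sumR_deriv l (f f' : nat -> R -> R) t :
  (forall k, In k l -> derivable_pt_lim (f k) t (f' k t)) ->
  derivable_pt_lim (fun t => sumR l (fun k => f k t)) t (sumR l (fun k => f' k t)).
Proof.
induction l as [|k l IH]; intros Hf; [apply derivable_pt_lim_const|].
apply derivable_pt_lim_plus; auto using in_eq, in_cons.
Qed.

Lemma derivable_pt_lim_eq_val f t l l' :
  derivable_pt_lim f t l -> l = l' -> derivable_pt_lim f t l'.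
Proof. intros Hf <-. exact Hf. Qed.

Lemma derivable_pt_lim_pow_comp f t l n : derivable_pt_lim f t l ->
  derivable_pt_lim (fun t => f t ^ n) t (INR n * f t ^ pred n * l).
Proof.
intros Hf. apply (derivable_pt_lim_comp f (fun y => y ^ n)); auto.
apply derivable_pt_lim_pow.
Qed.

Lemma S1_zero_r k : S1 k 0 = 1%nat.
Proof. induction k as [|k IH]; simpl; [reflexivity|]. rewrite IH. reflexivity. Qed.

Lemma S1_succ k j : S1 (S k) (S j) = (S1 (S k) j + S1 k (S j))%nat.
Proof.
assert (Hsum : forall l1 l2, (fold_right Nat.add 0 (l1 ++ l2)
          = fold_right Nat.add 0 l1 + fold_right Nat.add 0 l2)%nat).
{ intros l1 l2. induction l1; simpl; lia. }
cbn [S1]. rewrite (seq_S (S j)), map_app, Hsum. simpl. lia.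
Qed.

Lemma harm_gt k M : (M < k)%nat -> harm k M = 0.
Proof.
intros HMk. destruct k as [|k]; [lia|]. simpl.
replace (M - k)%nat with 0%nat by lia. reflexivity.
Qed.

Lemma harm_succ k M : harm (S k) (S M) = harm (S k) M + harm k M / INR (S M).
Proof.
destruct (le_lt_dec k M) as [HkM|HMk].
- cbn [harm]. replace (S M - k)%nat with (S (M - k)) by lia.
  rewrite sumR_last. replace (S k + (M - k))%nat with (S M) by lia.
  replace (S M - 1)%nat with M by lia. reflexivity.
- rewrite !harm_gt by lia. unfold Rdiv. ring.
Qed.

Definition wcoef (x : R) (i j : nat) : R :=
  (-1) ^ j * INR (fact i) * INR (S1 i j) * falling x j.

Lemma wcoef_0_succ x j : wcoef x 0 (S j) = (INR j - x) * wcoef x 0 j.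
Proof. unfold wcoef. cbn [S1 fact falling pow]. simpl INR. ring. Qed.

Lemma wcoef_succ_0 x i : wcoef x (S i) 0 = INR (S i) * wcoef x i 0.
Proof. unfold wcoef. rewrite !S1_zero_r, fact_simpl, mult_INR. simpl. ring. Qed.

Lemma wcoef_succ_succ x i j :
  wcoef x (S i) (S j) = INR (S i) * wcoef x i (S j) + (INR j - x) * wcoef x (S i) j.
Proof.
unfold wcoef. rewrite S1_succ, plus_INR, fact_simpl, mult_INR. cbn [falling pow]. ring.
Qed.

Definition Wpoly (x : R) (r : nat) (a b : R) : R :=
  sumR (seq 0 (S r)) (fun i => wcoef x i (r - i) * (a ^ i * b ^ (r - i))).

(* (a^2 d/da + b^2 d/db) Wpoly x r a b *)
Definition Wdiff (x : R) (r : nat) (a b : R) : R :=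
  sumR (seq 0 (S r)) (fun i => wcoef x i (r - i) *
    (INR i * a ^ S i * b ^ (r - i) + INR (r - i) * a ^ i * b ^ S (r - i))).

Lemma Wpoly_succ x r a b : Wpoly x (S r) a b = Wdiff x r a b + (a - x * b) * Wpoly x r a b.
Proof.
unfold Wpoly at 1.
rewrite (sumR_seq_succ_split r _
  (fun i => INR (S i) * wcoef x i (r - i) * a ^ S i * b ^ (r - i))
  (fun i => (INR (r - i) - x) * wcoef x i (r - i) * a ^ i * b ^ S (r - i))).
- unfold Wdiff, Wpoly. rewrite <- sumR_scal, <- sumR_plus.
  apply sumR_ext_in. intros i _. rewrite S_INR. simpl pow. ring.
- rewrite !Nat.sub_0_r, wcoef_0_succ. simpl pow. ring.
- rewrite !Nat.sub_diag, wcoef_succ_0. ring.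
- intros i Hi. replace (S r - S i)%nat with (S (r - S i)) by lia.
  replace (r - i)%nat with (S (r - S i)) by lia.
  rewrite wcoef_succ_succ. simpl pow. ring.
Qed.

Lemma neg1_pow_sub n m : (m <= n)%nat -> (-1) ^ (n - m) = (-1) ^ n * (-1) ^ m.
Proof.
intros Hmn. replace n with (n - m + m)%nat at 2 by lia.
rewrite pow_add, Rmult_assoc, <- Rpow_mult_distr.
replace (-1 * -1) with 1 by ring. rewrite pow1. ring.
Qed.

Lemma acoef_wcoef N r i x : (i <= r <= N)%nat ->
  acoef N r i x = (-1) ^ N * INR (fact (N - 1)) * harm (r - 1) (N - 1) * wcoef x i (r - i).
Proof.
intros Hir. unfold acoef, wcoef.
replace (N + i - r)%nat with (N - (r - i))%nat by lia.
rewrite neg1_pow_sub by lia. ring.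
Qed.

Definition logl (lam t : R) : R := ln (1 + lam * t).
Definition dlogl (lam t : R) : R := lam / (1 + lam * t).
Definition ainv (lam t : R) : R := / (2 * lam + logl lam t).
Definition binv (lam t : R) : R := / (lam + logl lam t).

Definition regular (lam t : R) : Prop :=
  0 < 1 + lam * t /\ Rabs (logl lam t) < Rabs lam / 2.

Definition Wt (lam x : R) (r : nat) (t : R) : R := Wpoly x r (ainv lam t) (binv lam t).

Definition Kf (lam x : R) (N : nat) (t : R) : R :=
  sumR (seq 0 N) (fun s => harm s (N - 1) * Wt lam x (S s) t).

Section Derivatives.

Variables lam x : R.
Hypothesis Hlam : lam <> 0.

Lemma regular_nonzero t : regular lam t ->
  0 < 1 + / lam * logl lam t /\ lam + logl lam t <> 0 /\ 2 * lam + logl lam t <> 0.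
Proof.
intros [_ Hsmall].
assert (Hu : Rabs (/ lam * logl lam t) < / 2).
{ rewrite Rabs_mult, Rabs_inv.
  apply (Rmult_lt_reg_l (Rabs lam)); [apply Rabs_pos_lt; exact Hlam|].
  field_simplify; [lra|apply Rabs_no_R0; exact Hlam]. }
apply Rabs_def2 in Hu.
assert (Hb : lam + logl lam t = lam * (1 + / lam * logl lam t)) by (field; exact Hlam).
assert (Ha : 2 * lam + logl lam t = lam * (2 + / lam * logl lam t)) by (field; exact Hlam).
rewrite Hb, Ha. repeat split; [lra| |]; apply Rmult_integral_contrapositive; split; lra.
Qed.

Lemma dlogl_deriv t : regular lam t -> derivable_pt_lim (dlogl lam) t (- dlogl lam t ^ 2).
Proof.
intros [Hpos _]. apply is_derive_Reals. unfold dlogl. auto_derive; [lra|]. field. lra.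
Qed.

Lemma ainv_deriv t : regular lam t ->
  derivable_pt_lim (ainv lam) t (- dlogl lam t * ainv lam t ^ 2).
Proof.
intros Hreg. destruct (regular_nonzero t Hreg) as (_ & _ & Ha). destruct Hreg as [Hpos _].
apply is_derive_Reals. unfold ainv, dlogl, logl in *. auto_derive; [auto|]. field. lra.
Qed.

Lemma binv_deriv t : regular lam t ->
  derivable_pt_lim (binv lam) t (- dlogl lam t * binv lam t ^ 2).
Proof.
intros Hreg. destruct (regular_nonzero t Hreg) as (_ & Hb & _). destruct Hreg as [Hpos _].
apply is_derive_Reals. unfold binv, dlogl, logl in *. auto_derive; [auto|]. field. lra.
Qed.

Lemma Fgen_deriv t : regular lam t ->
  derivable_pt_lim (Fgen lam x) t
    (dlogl lam t * (x * binv lam t - ainv lam t) * Fgen lam x t).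
Proof.
intros Hreg. destruct (regular_nonzero t Hreg) as (Hc & Hb & Ha). destruct Hreg as [Hpos _].
apply is_derive_Reals. unfold Fgen, Rpower, dlogl, ainv, binv, logl in *.
auto_derive; [auto|]. field. lra.
Qed.

Lemma monomial_deriv i j t : regular lam t ->
  derivable_pt_lim (fun t => ainv lam t ^ i * binv lam t ^ j) t
    (- dlogl lam t * (INR i * ainv lam t ^ S i * binv lam t ^ j
                      + INR j * ainv lam t ^ i * binv lam t ^ S j)).
Proof.
intros Hreg.
eapply derivable_pt_lim_eq_val.
{ apply derivable_pt_lim_mult; apply derivable_pt_lim_pow_comp;
    [apply ainv_deriv | apply binv_deriv]; exact Hreg. }
destruct i, j; simpl; ring.
Qed.

Lemma Wt_deriv r t : regular lam t ->
  derivable_pt_lim (Wt lam x r) t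
    (- dlogl lam t * (Wt lam x (S r) t - (ainv lam t - x * binv lam t) * Wt lam x r t)).
Proof.
intros Hreg. unfold Wt at 1, Wpoly.
eapply derivable_pt_lim_eq_val.
{ apply (sumR_deriv _ (fun i t => wcoef x i (r - i) * (ainv lam t ^ i * binv lam t ^ (r - i)))
    (fun i t => wcoef x i (r - i) * (- dlogl lam t *
       (INR i * ainv lam t ^ S i * binv lam t ^ (r - i)
        + INR (r - i) * ainv lam t ^ i * binv lam t ^ S (r - i))))).
  intros i _. apply derivable_pt_lim_scal, monomial_deriv, Hreg. }
unfold Wt. rewrite Wpoly_succ.
transitivity (- dlogl lam t * Wdiff x r (ainv lam t) (binv lam t)); [|ring].
unfold Wdiff. rewrite <- sumR_scal. apply sumR_ext_in. intros i _. ring.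
Qed.

Lemma Kf_deriv N t : regular lam t ->
  derivable_pt_lim (Kf lam x N) t
    (- dlogl lam t * (sumR (seq 0 N) (fun s => harm s (N - 1) * Wt lam x (S (S s)) t)
                      - (ainv lam t - x * binv lam t) * Kf lam x N t)).
Proof.
intros Hreg. unfold Kf at 1.
eapply derivable_pt_lim_eq_val.
{ apply (sumR_deriv _ (fun s t => harm s (N - 1) * Wt lam x (S s) t)
    (fun s t => harm s (N - 1) * (- dlogl lam t
       * (Wt lam x (S (S s)) t - (ainv lam t - x * binv lam t) * Wt lam x (S s) t)))).
  intros s _. apply derivable_pt_lim_scal, Wt_deriv, Hreg. }
rewrite (sumR_ext_in _ _ (fun s => - dlogl lam t * (harm s (N - 1) * Wt lam x (S (S s)) t)
   + dlogl lam t * (ainv lam t - x * binv lam t) * (harm s (N - 1) * Wt lam x (S s) t))).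
- rewrite sumR_plus, !sumR_scal. unfold Kf. ring.
- intros s _. ring.
Qed.

Lemma Kf_succ M t : Kf lam x (S (S M)) t =
  Kf lam x (S M) t
  + / INR (S M) * sumR (seq 0 (S M)) (fun s => harm s M * Wt lam x (S (S s)) t).
Proof.
unfold Kf. replace (S (S M) - 1)%nat with (S M) by lia. replace (S M - 1)%nat with M by lia.
rewrite (sumR_first (S M)), (sumR_first M (fun s => harm s M * Wt lam x (S s) t)).
rewrite (sumR_ext_in _ _ (fun s => harm (S s) M * Wt lam x (S (S s)) t
                                   + / INR (S M) * (harm s M * Wt lam x (S (S s)) t))).
- rewrite sumR_plus, sumR_scal, (sumR_last 0 M), (harm_gt (S (0 + M))) by lia.
  cbn [harm]. ring.
- intros s _. rewrite harm_succ. unfold Rdiv. ring.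
Qed.

Lemma coefN_eq M t : coefN lam x (S M) t =
  (-1) ^ S M * INR (fact M) * dlogl lam t ^ S M * Kf lam x (S M) t.
Proof.
unfold coefN, Kf, dlogl. rewrite sumR_shift.
unfold Rdiv at 1. rewrite <- pow_inv, <- Rpow_mult_distr.
rewrite <- !sumR_scal. apply sumR_ext_in. intros s Hs. apply in_seq in Hs.
unfold Wt, Wpoly. rewrite <- !sumR_scal. apply sumR_ext_in. intros i Hi. apply in_seq in Hi.
rewrite acoef_wcoef by lia.
replace (S s - 1)%nat with s by lia. replace (S M - 1)%nat with M by lia.
unfold ainv, binv, logl. rewrite !pow_inv. unfold Rdiv. ring.
Qed.

Lemma coefN_Fgen_deriv M t : regular lam t ->
  derivable_pt_lim (fun t => coefN lam x (S M) t * Fgen lam x t) t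
    (coefN lam x (S (S M)) t * Fgen lam x t).
Proof.
intros Hreg.
apply (derivable_pt_lim_ext
  (fun t => (-1) ^ S M * INR (fact M) * dlogl lam t ^ S M * Kf lam x (S M) t * Fgen lam x t)).
{ intros z. rewrite coefN_eq. reflexivity. }
eapply derivable_pt_lim_eq_val.
{ apply derivable_pt_lim_mult; [|apply Fgen_deriv, Hreg].
  apply (derivable_pt_lim_mult (fun t => (-1) ^ S M * INR (fact M) * dlogl lam t ^ S M));
    [|apply Kf_deriv, Hreg].
  apply derivable_pt_lim_mult; [apply derivable_pt_lim_const|].
  apply derivable_pt_lim_pow_comp, dlogl_deriv, Hreg. }
rewrite coefN_eq, Kf_succ, (fact_simpl M), mult_INR.
assert (HM : INR (S M) <> 0) by (apply not_0_INR; lia).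
replace (S M - 1)%nat with M by lia. simpl pred. simpl pow.
field. exact HM.
Qed.

Definition Fgen_derivs (n : nat) : R -> R :=
  match n with
  | O => Fgen lam x
  | S _ => fun t => coefN lam x n t * Fgen lam x t
  end.

Lemma Fgen_derivs_deriv n t : regular lam t ->
  derivable_pt_lim (Fgen_derivs n) t (Fgen_derivs (S n) t).
Proof.
intros Hreg. destruct n as [|M]; [|apply coefN_Fgen_deriv, Hreg].
eapply derivable_pt_lim_eq_val; [apply Fgen_deriv, Hreg|].
unfold Fgen_derivs. rewrite coefN_eq. unfold Kf, Wt, Wpoly, wcoef, sumR. simpl. ring.
Qed.

End Derivatives.

Lemma nth_deriv_on_seq D (g : nat -> R -> R) :
  (forall n t, D t -> derivable_pt_lim (g n) t (g (S n) t)) ->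
  forall k n, nth_deriv_on D k (g n) (g (n + k)%nat).
Proof.
intros Hg k. induction k as [|k IH]; intros n.
- rewrite Nat.add_0_r. constructor.
- apply nth_deriv_S with (g (S n)); [apply Hg|].
  rewrite Nat.add_succ_r, <- Nat.add_succ_l. apply IH.
Qed.

Lemma ln_1p_small c : 0 < c ->
  exists m, 0 < m /\ forall u, Rabs u < m -> 0 < 1 + u /\ Rabs (ln (1 + u)) < c.
Proof.
intros Hc. destruct (ln_continue 1 Rlt_0_1 c Hc) as (alp & Halp & Hln).
exists (Rmin alp 1). split; [apply Rmin_pos; lra|].
intros u Hu. pose proof (Rmin_l alp 1). pose proof (Rmin_r alp 1).
apply Rabs_def2 in Hu as Hu'. split; [lra|].
destruct (Req_dec u 0) as [->|Hu0].
- rewrite Rplus_0_r, ln_1, Rabs_R0. exact Hc.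
- rewrite <- (Rminus_0_r (ln (1 + u))), <- ln_1. apply (Hln (1 + u)).
  split; [split; [lra|]|]; simpl; unfold R_dist.
  + intros Heq. apply Hu0. lra.
  + replace (1 + u - 1) with u by ring. lra.
Qed.

Lemma regular_near_0 lam : lam <> 0 ->
  exists delta, 0 < delta /\ forall t, Rabs t < delta -> regular lam t.
Proof.
intros Hlam. assert (Habs : 0 < Rabs lam) by (apply Rabs_pos_lt; exact Hlam).
destruct (ln_1p_small (Rabs lam / 2)) as (m & Hm & Hln); [lra|].
exists (m / Rabs lam). split; [apply Rdiv_lt_0_compat; assumption|].
intros t Ht. apply Hln.
rewrite Rabs_mult. apply (Rmult_lt_compat_l (Rabs lam)) in Ht; [|exact Habs].
replace (Rabs lam * (m / Rabs lam)) with m in Ht by (field; lra). exact Ht.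
Qed.

Theorem theorem3 (lam x : R) (Hlam : lam <> 0) :
  exists delta : R, 0 < delta /\
    forall N : nat, (1 <= N)%nat ->
      nth_deriv_on (fun t => Rabs t < delta) N (Fgen lam x)
        (fun t => coefN lam x N t * Fgen lam x t).
Proof.
destruct (regular_near_0 lam Hlam) as (delta & Hdelta & Hreg).
exists delta. split; [exact Hdelta|].
intros [|M] HN; [lia|].
apply (nth_deriv_on_seq _ (Fgen_derivs lam x)
         (fun n t Ht => Fgen_derivs_deriv lam x Hlam n t (Hreg t Ht)) (S M) 0).
Qed.
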